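(* Let $d$ be sufficiently large, $\delta\in(0,1)$, and let $\mathsf{ALG}$ be a deterministic first-order algorithm making $T=d^{1+\delta/6-o(1)}$ queries. Fix any $\mathbf{A}\in\{-1,1\}^{(d/2)\times d}$. Then with probability at least $1-d^{-\omega(1)}$ over independent uniform $\mathbf{v}_1,\dots,\mathbf{v}_N\in\frac1{\sqrt d}\{-1,1\}^d$, the correlation times of $\mathsf{ALG}$ run on $F_{\mathbf{A},V}$ satisfy $t_1\le t_2\le\cdots\le t_N$.
   Context: Hard function: $F_{\mathbf{A},V}(\mathbf{x})=\frac{1}{\sqrt dL}\max\{L\|\mathbf{A}\mathbf{x}\|_\infty-1,\max_{i\in[N]}(\langle\mathbf{v}_i,\mathbf{x}\rangle-i\gamma)\}$ on $\mathbb{B}^d$, with $V=(\mathbf{v}_1,\dots,\mathbf{v}_N)$, $\gamma=\log^2 d/d^{\delta/4}$, $N=d^{\delta/6}/\log^4 d$, $L=\exp(\log^5 d)$. The algorithm accesses $F$ through the oracle returning $F(\mathbf{x})$ and subgradient $\mathbf{g}(\mathbf{x})$: if the maximum is attained by $(\pm L\langle\mathbf{A}_j,\mathbf{x}\rangle-1)/(\sqrt dL)$ for some row $\mathbf{A}_j$, return $\pm\mathbf{A}_j/\sqrt d$ (correct sign) for the smallest such $j$; otherwise return $\mathbf{v}_i/(\sqrt dL)$ for the smallest $i$ attaining the maximum. Correlation time: with $\xi=2/L$, for $i\in[N]$, $t_i\in[T]\cup\{\infty\}$ is the first round in which $\mathsf{ALG}$ queries a point $\mathbf{x}_{t_i}$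 with $|\langle\mathbf{x}_{t_i},\mathbf{v}_i\rangle|\ge\gamma/4$ and $\|\mathbf{A}\mathbf{x}_{t_i}\|_\infty\le\xi$; $t_i=\infty$ if no such query exists. *)

From HB Require Import structures.
From mathcomp Require Import all_boot all_order all_algebra.
From mathcomp Require Import all_classical all_reals all_analysis.
Set Implicit Arguments. Unset Strict Implicit. Unset Printing Implicit Defensive.
Import Order.TTheory GRing.Theory Num.Theory.
Local Open Scope ring_scope.

Section HardFunction.
Variable R : realType.

Definition gam (d : nat) (delta : R) : R := (ln (d%:R : R)) ^+ 2 / ((d%:R : R) `^ (delta / 4)).
Definition NN (d : nat) (delta : R) : nat :=
  Num.truncn ((d%:R : R) `^ (delta / 6) / (ln (d%:R : R)) ^+ 4).
Definition LL (d : nat) : R := expR ((ln (d%:R : R)) ^+ 5).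
Definition xi (d : nat) : R := 2 / LL d.

Variables (d m N : nat).

Definition ip (u w : 'cV[R]_d) : R := \sum_(k < d) u k 0 * w k 0.

Definition in_ball (x : 'cV[R]_d) : bool := \sum_(k < d) x k 0 ^+ 2 <= 1.

Definition norm_inf_Ax (A : 'M[R]_(m, d)) (x : 'cV[R]_d) : R :=
  \big[Num.max/0]_(j < m) `|(A *m x) j 0|.

Definition vec_of (s : {ffun 'I_N * 'I_d -> bool}) (i : 'I_N) : 'cV[R]_d :=
  \col_k ((if s (i, k) then 1 else -1) / Num.sqrt (d%:R : R)).

Variables (gamma L : R) (A : 'M[R]_(m, d)) (v : 'I_N -> 'cV[R]_d).

Definition aterm (x : 'cV[R]_d) : R := L * norm_inf_Ax A x - 1.
Definition vterm (x : 'cV[R]_d) (i : 'I_N) : R := ip (v i) x - (i.+1)%:R * gamma.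
Definition vmax (x : 'cV[R]_d) : R := \big[Num.max/aterm x]_(i < N) vterm x i.

Definition Fval (x : 'cV[R]_d) : R := vmax x / (Num.sqrt (d%:R : R) * L).

Definition subgrad (x : 'cV[R]_d) : 'cV[R]_d :=
  if [forall i, vterm x i <= aterm x] then
    match [seq j <- enum 'I_m | `|(A *m x) j 0| == norm_inf_Ax A x] with
    | j :: _ => ((if 0 <= (A *m x) j 0 then 1 else -1) / Num.sqrt (d%:R : R))
                  *: (row j A)^T
    | [::] => 0
    end
  else
    match [seq i <- enum 'I_N | vterm x i == vmax x] with
    | i :: _ => (Num.sqrt (d%:R : R) * L)^-1 *: v i
    | [::] => 0
    end.

Definition oracle (x : 'cV[R]_d) : R * 'cV[R]_d := (Fval x, subgrad x).

(* A deterministic first-order algorithm: the next query is a function of the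
   transcript of all previous oracle answers. *)
Variable ALG : seq (R * 'cV[R]_d) -> 'cV[R]_d.

Fixpoint transcript (t : nat) : seq (R * 'cV[R]_d) :=
  match t with
  | 0 => [::]
  | t.+1 => let h := transcript t in rcons h (oracle (ALG h))
  end.

(* query of round k.+1 (rounds are numbered 1..T) *)
Definition query (k : nat) : 'cV[R]_d := ALG (transcript k).

Variable T : nat.
Variable xi0 : R.

Definition corr_cond (i : 'I_N) (x : 'cV[R]_d) : bool :=
  (gamma / 4 <= `|ip x (v i)|) && (norm_inf_Ax A x <= xi0).

(* correlation time t_i in [T] \cup {infinity}; None encodes infinity *)
Definition corr_time (i : 'I_N) : option nat :=
  let k := find (fun k => corr_cond i (query k)) (iota 0 T) in
  if (k < T)%N then Some k.+1 else None.

End HardFunction.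

Definition time_le (a b : option nat) : bool :=
  match a, b with
  | _, None => true
  | None, Some _ => false
  | Some x, Some y => (x <= y)%N
  end.

Definition sorted_times (R : realType) (d : nat) (delta : R)
  (A : 'M[R]_(d./2, d)) (ALG : seq (R * 'cV[R]_d) -> 'cV[R]_d) (T : nat)
  (s : {ffun 'I_(NN d delta) * 'I_d -> bool}) : bool :=
  let v := vec_of R s in
  let t := corr_time (gam d delta) (LL R d) A v ALG T (xi R d) in
  [forall i : 'I_(NN d delta), forall j : 'I_(NN d delta),
     (i <= j)%N ==> time_le (t i) (t j)].

(* probability, over uniform sign patterns s (i.e. independent uniform
   v_1..v_N in (1/sqrt d){-1,1}^d), that the correlation times are NOT sorted *)
Definition fail_prob (R : realType) (d : nat) (delta : R)
  (A : 'M[R]_(d./2, d)) (ALG : seq (R * 'cV[R]_d) -> 'cV[R]_d) (T : nat) : R :=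
  (#|[set s | ~~ @sorted_times R d delta A ALG T s]|)%:R
  / (#|{: {ffun 'I_(NN d delta) * 'I_d -> bool}}|)%:R.

(* Sortedness is a deterministic consequence of a small-correlation event.
   Replace v_l by 0 for all l > i; as long as the queries do not correlate
   with v_i, the v_l with l > i never attain the maximum defining F (they are
   dominated by the i-th term, or by the A-term when ||Ax|| is large), so the
   oracle answers, hence the queries, are the same as for the truncated
   function. Hence if no query of the truncated run correlates with any v_l,
   l > i, then no v_j with j > i is found before v_i, i.e. t_i <= t_j.
   The truncated run is independent of v_l, so resampling the signs of v_l
   makes <x, v_l> a Rademacher sum of variance at most 1/d; a Chernoff bound
   gives probability 2 exp(1/2 - sqrt d gamma / 8) <= d exp(1/2 - ln^2 d / 8).
   A union bound over the N^2 T triples (i, l, round) finishes, since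
   N^2 T <= d^4 and exp(-ln^2 d / 8) is smaller than any power of d. *)

From HB Require Import structures.
From mathcomp Require Import all_boot all_order all_algebra.
From mathcomp Require Import all_classical all_reals all_analysis.
From mathcomp Require Import ring lra.
Set Implicit Arguments. Unset Strict Implicit. Unset Printing Implicit Defensive.
Import Order.TTheory GRing.Theory Num.Theory numFieldNormedType.Exports.
Local Open Scope ring_scope.

Definition first_hit (P : pred nat) (T : nat) : option nat :=
  let k := find P (iota 0 T) in if (k < T)%N then Some k.+1 else None.

Lemma time_le_first_hit (P Q : pred nat) (T : nat) :
  (forall k, (k < T)%N -> (forall k', (k' <= k)%N -> ~~ P k') -> ~~ Q k) ->
  time_le (first_hit P T) (first_hit Q T).
Proof.
move=> QnotP; rewrite /first_hit.
set kP := find P (iota 0 T); set kQ := find Q (iota 0 T).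
have [kQ_lt|] := ltnP kQ T; last by case: ifP.
have QkQ : Q kQ.
  have := @nth_find _ 0%N Q (iota 0 T).
  by rewrite nth_iota ?add0n // has_find size_iota; apply.
have [kP_le|kQ_lt_kP] := leqP kP kQ; first by rewrite (leq_ltn_trans kP_le kQ_lt).
suff: ~~ Q kQ by rewrite QkQ.
apply: QnotP => // k' le_k'.
have := @before_find _ 0%N P (iota 0 T) k' (leq_ltn_trans le_k' kQ_lt_kP).
by rewrite nth_iota ?add0n ?(leq_ltn_trans le_k' kQ_lt) // => ->.
Qed.

Section OracleAgreement.
Variables (R : realType) (d m N : nat) (gamma L : R) (A : 'M[R]_(m, d)).

Lemma ipC (u w : 'cV[R]_d) : ip u w = ip w u.
Proof. by apply: eq_bigr => k _; rewrite mulrC. Qed.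

Lemma ip0 (w : 'cV[R]_d) : ip 0 w = 0.
Proof. by rewrite /ip big1 // => k _; rewrite mxE mul0r. Qed.

Lemma vmax_le_dominated (v v' : 'I_N -> 'cV[R]_d) x D :
  D <= vmax gamma L A v' x ->
  (forall l, v l != v' l -> vterm gamma v x l < D) ->
  vmax gamma L A v x <= vmax gamma L A v' x.
Proof.
move=> le_D dom; apply: bigmax_le => [|i _]; first exact: bigmax_ge_id.
have [e|ne] := eqVneq (v i) (v' i); first by rewrite /vterm e; exact: le_bigmax.
exact/ltW/(lt_le_trans (dom i ne)).
Qed.

Lemma subgrad_caseE (v : 'I_N -> 'cV[R]_d) x :
  [forall i, vterm gamma v x i <= aterm L A x] = (vmax gamma L A v x <= aterm L A x).
Proof.
apply/forallP/idP => [le_a|le_max i]; first by apply: bigmax_le => // i _.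
exact: le_trans (le_bigmax _ _ i) le_max.
Qed.

Lemma oracle_eq_dominated (v v' : 'I_N -> 'cV[R]_d) x D :
  (D = aterm L A x \/ exists2 i, v i = v' i & D = vterm gamma v x i) ->
  (forall l, v l != v' l -> vterm gamma v x l < D /\ vterm gamma v' x l < D) ->
  oracle gamma L A v x = oracle gamma L A v' x.
Proof.
move=> shared dom.
have [D_le D_le'] : D <= vmax gamma L A v x /\ D <= vmax gamma L A v' x.
  case: shared => [->|[i e ->]]; first by split; exact: bigmax_ge_id.
  by split; [|rewrite /vterm e]; exact: le_bigmax.
have e_max : vmax gamma L A v x = vmax gamma L A v' x.
  apply: le_anti; rewrite (vmax_le_dominated D_le') => [|l /dom[] //].
  by apply: (vmax_le_dominated D_le) => l; rewrite eq_sym => /dom[].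
rewrite /oracle /Fval /subgrad !subgrad_caseE e_max; congr pair; case: ifP => // _.
have e_argmax : [seq i <- enum 'I_N | vterm gamma v x i == vmax gamma L A v' x] =
                [seq i <- enum 'I_N | vterm gamma v' x i == vmax gamma L A v' x].
  apply: eq_filter => i /=.
  have [e|ne] := eqVneq (v i) (v' i); first by rewrite /vterm e.
  have [lt lt'] := dom i ne.
  by rewrite !lt_eqF // (lt_le_trans _ D_le') // -e_max.
rewrite -e_argmax.
case E: [seq i <- enum 'I_N | _] => [//|i s].
have : i \in [seq i <- enum 'I_N | vterm gamma v x i == vmax gamma L A v' x].
  by rewrite E mem_head.
rewrite mem_filter => /andP[/eqP vi_max _].
have [-> //|ne] := eqVneq (v i) (v' i).
have [lt _] := dom i ne.
by move: (lt_le_trans lt D_le); rewrite e_max vi_max ltxx.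
Qed.

Definition vtrunc (v : 'I_N -> 'cV[R]_d) (i : 'I_N) : 'I_N -> 'cV[R]_d :=
  fun l => if (l <= i)%N then v l else 0.

Hypotheses (gamma_gt0 : 0 < gamma) (L_gt0 : 0 < L).

Lemma oracle_vtrunc (v : 'I_N -> 'cV[R]_d) (i : 'I_N) x :
  ~~ corr_cond gamma A v (2 / L) i x ->
  (forall l : 'I_N, (i < l)%N -> `|ip x (v l)| < gamma / 4) ->
  oracle gamma L A v x = oracle gamma L A (vtrunc v i) x.
Proof.
move=> not_corr small.
pose B := gamma / 4 - (i.+2)%:R * gamma.
have tail_lt (l : 'I_N) : v l != vtrunc v i l ->
    vterm gamma v x l < B /\ vterm gamma (vtrunc v i) x l < B.
  rewrite /vtrunc /vterm; case: leqP => [_|lt_il _]; first by rewrite eqxx.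
  have /ltr_normlP[lo hi] := small l lt_il.
  have le_l : (i.+2)%:R * gamma <= (l.+1)%:R * gamma by rewrite ler_pM2r // ler_nat.
  by rewrite ip0 ipC /B; split; lra.
have [normA_le|normA_gt] := boolP (norm_inf_Ax A x <= 2 / L).
  apply: (@oracle_eq_dominated _ _ _ (vterm gamma v x i)).
    by right; exists i; rewrite /vtrunc ?leqnn.
  move: not_corr; rewrite /corr_cond normA_le andbT -ltNge => /ltr_normlP[lo hi].
  have vi_gt : B < vterm gamma v x i by rewrite /vterm ipC /B; lra.
  by move=> l /tail_lt[lt lt']; split; apply: lt_trans vi_gt.
apply: (@oracle_eq_dominated _ _ _ (aterm L A x)); first by left.
have LA_gt : 2 < L * norm_inf_Ax A x by rewrite -ltr_pdivrMl // mulrC ltNge.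
have B_lt0 : B < 0.
  rewrite /B subr_lt0; apply: (@lt_le_trans _ _ gamma).
    by rewrite ltr_pdivrMr // ltr_pMr // ltr1n.
  by apply: ler_peMl; [exact: ltW | rewrite ler1n].
move=> l /tail_lt[lt lt']; rewrite /aterm; split; lra.
Qed.

Variable ALG : seq (R * 'cV[R]_d) -> 'cV[R]_d.

Lemma transcript_vtrunc (v : 'I_N -> 'cV[R]_d) (i : 'I_N) (K : nat) :
  (forall k, (k < K)%N -> ~~ corr_cond gamma A v (2 / L) i (query gamma L A v ALG k)) ->
  (forall (l : 'I_N) k, (i < l)%N -> (k < K)%N ->
     `|ip (query gamma L A (vtrunc v i) ALG k) (v l)| < gamma / 4) ->
  forall k, (k <= K)%N ->
    transcript gamma L A v ALG k = transcript gamma L A (vtrunc v i) ALG k.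
Proof.
move=> not_corr small; elim=> [//|k IH] lt_kK /=.
have e_k := IH (ltnW lt_kK); rewrite e_k; congr rcons.
apply: oracle_vtrunc => [|l lt_il]; last exact: small.
by have := not_corr k lt_kK; rewrite /query e_k.
Qed.

Lemma corr_time_sorted (v : 'I_N -> 'cV[R]_d) (T : nat) :
  (forall (i l : 'I_N) k, (i < l)%N -> (k < T)%N ->
     `|ip (query gamma L A (vtrunc v i) ALG k) (v l)| < gamma / 4) ->
  forall i j : 'I_N, (i <= j)%N ->
    time_le (corr_time gamma L A v ALG T (2 / L) i)
            (corr_time gamma L A v ALG T (2 / L) j).
Proof.
move=> small i j le_ij; apply: time_le_first_hit => k lt_kT not_corr_i.
have [e|ne] := eqVneq i j; first by rewrite -e not_corr_i.
have lt_ij : (i < j)%N by rewrite ltn_neqAle le_ij andbT.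
have e_k : query gamma L A v ALG k = query gamma L A (vtrunc v i) ALG k.
  rewrite /query (@transcript_vtrunc v i k) // => [k' lt_k'k|l k' lt_il lt_k'k].
    exact/not_corr_i/ltnW.
  exact/small/(ltn_trans lt_k'k).
by rewrite /corr_cond e_k negb_and -ltNge (small i j k lt_ij lt_kT).
Qed.

End OracleAgreement.

Section RademacherTail.
Variable R : realType.

Definition sgb (b : bool) : R := if b then 1 else -1.

Lemma sqr_sgb b : sgb b ^+ 2 = 1.
Proof. by case: b; rewrite /sgb ?sqrrN expr1n. Qed.

Lemma natr_card_setE (T : finType) (P : pred T) :
  (#|[set x | P x]|)%:R = \sum_x (if P x then 1 else 0 : R).
Proof. by rewrite -sum1dep_card natr_sum big_mkcond. Qed.

(* From [e^y (1 - y) <= 1] and [e^-y (1 + y) <= 1] we get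
   [cosh y <= 1 / (1 - y^2) <= 1 + 2 y^2] on [y^2 <= 1/4]. *)
Lemma expRD_expRN_le (y : R) : y ^+ 2 <= 1 / 4 ->
  expR y + expR (- y) <= 2 * expR (2 * y ^+ 2).
Proof.
move=> y_small.
have y_lt1 : y < 1 by nra.
have y_gtN1 : -1 < y by nra.
set u := expR y; set w := expR (- y).
have uw : u * w = 1 by rewrite /u /w -expRD subrr expR0.
have u_ge : 1 + y <= u by exact: expR_ge1Dx.
have w_ge : 1 - y <= w by have := expR_ge1Dx (- y); rewrite /w; lra.
have uy_le : u * (1 - y) <= 1.
  by rewrite -[X in _ <= X]uw; apply: ler_wpM2l w_ge; exact: expR_ge0.
have wy_le : w * (1 + y) <= 1.
  by rewrite -[X in _ <= X]uw [u * w]mulrC; apply: ler_wpM2l u_ge; exact: expR_ge0.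
have cosh_le : (1 - y ^+ 2) * (u + w) <= 2.
  have -> : (1 - y ^+ 2) * (u + w) = u * (1 - y) * (1 + y) + w * (1 + y) * (1 - y)
    by ring.
  have : u * (1 - y) * (1 + y) <= 1 + y by nra.
  have : w * (1 + y) * (1 - y) <= 1 - y by nra.
  lra.
apply: (@le_trans _ _ (2 * (1 + 2 * y ^+ 2))); last first.
  by rewrite ler_pM2l // expR_ge1Dx.
rewrite -(@ler_pM2l _ (1 - y ^+ 2)); first by apply: le_trans cosh_le _; nra.
lra.
Qed.

Variable n : nat.
Implicit Types (a : 'I_n -> R) (t : R).

(* Exponential Markov inequality, with the moment generating function
   computed by distributing the product over the sign patterns. *)
Lemma card_sum_sgb_ge a t :
  (#|[set tau : {ffun 'I_n -> bool} | t <= \sum_k a k * sgb (tau k)]|)%:R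
  <= expR (- t) * \prod_k (expR (a k) + expR (- a k)).
Proof.
rewrite natr_card_setE.
have -> : \prod_k (expR (a k) + expR (- a k)) =
          \sum_(tau : {ffun 'I_n -> bool}) \prod_k expR (a k * sgb (tau k)).
  rewrite -(bigA_distr_bigA (fun k (b : bool) => expR (a k * sgb b))) /=.
  by apply: eq_bigr => k _; rewrite big_bool /= /sgb mulr1 mulrN1.
rewrite mulr_sumr; apply: ler_sum => tau _; rewrite -expR_sum -expRD.
case: ifP => [t_le|_]; last exact: expR_ge0.
by apply: le_trans _ (expR_ge1Dx _); lra.
Qed.

Lemma prod_expRD_expRN_le a : (forall k, a k ^+ 2 <= 1 / 4) ->
  \prod_k (expR (a k) + expR (- a k)) <= 2 ^+ n * expR (2 * \sum_k a k ^+ 2).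
Proof.
move=> a_small.
apply: (@le_trans _ _ (\prod_k (2 * expR (2 * a k ^+ 2)))).
  by apply: ler_prod => k _; rewrite addr_ge0 ?expR_ge0 ?expRD_expRN_le.
by rewrite big_split /= prodr_const card_ord -expR_sum mulr_sumr.
Qed.

Lemma card_abs_sum_sgb_ge a t : (forall k, a k ^+ 2 <= 1 / 4) ->
  (#|[set tau : {ffun 'I_n -> bool} | t <= `|\sum_k a k * sgb (tau k)|]|)%:R
  <= 2 ^+ n.+1 * expR (2 * \sum_k a k ^+ 2 - t).
Proof.
move=> a_small.
have one_sided a' : (forall k, a' k ^+ 2 <= 1 / 4) ->
    (#|[set tau : {ffun 'I_n -> bool} | t <= \sum_k a' k * sgb (tau k)]|)%:R
    <= 2 ^+ n * expR (2 * \sum_k a' k ^+ 2 - t).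
  move=> a'_small; apply: le_trans (card_sum_sgb_ge a' t) _.
  rewrite [_ - t]addrC expRD mulrCA ler_wpM2l ?expR_ge0 //.
  exact: prod_expRD_expRN_le.
have neg_small k : (- a k) ^+ 2 <= 1 / 4 by rewrite sqrrN.
have sumN tau : \sum_k - a k * sgb (tau k) = - \sum_k a k * sgb (tau k).
  by rewrite -sumrN; apply: eq_bigr => k _; rewrite mulNr.
have sqrN : \sum_k (- a k) ^+ 2 = \sum_k a k ^+ 2.
  by apply: eq_bigr => k _; rewrite sqrrN.
have sub : [set tau : {ffun 'I_n -> bool} | t <= `|\sum_k a k * sgb (tau k)|]
    \subset [set tau : {ffun 'I_n -> bool} | t <= \sum_k a k * sgb (tau k)]
        :|: [set tau : {ffun 'I_n -> bool} | t <= \sum_k - a k * sgb (tau k)].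
  apply/fintype.subsetP => tau; rewrite !inE sumN.
  by case: (lerP 0 (\sum_k a k * sgb (tau k))) => [/ger0_norm|/ltr0_norm] ->
    => ->; rewrite ?orbT.
apply: (@le_trans _ _ (#|[set tau : {ffun 'I_n -> bool} | t <= \sum_k a k * sgb (tau k)]|%:R
    + #|[set tau : {ffun 'I_n -> bool} | t <= \sum_k - a k * sgb (tau k)]|%:R)).
  rewrite -natrD ler_nat (leq_trans (subset_leq_card sub)) //.
  exact: leq_card_setU.
have := one_sided _ a_small; have := one_sided _ neg_small; rewrite sqrN exprS.
lra.
Qed.

End RademacherTail.

Section Resign.
Variables (R : realType) (I : finType) (n : nat).

(* Multiplies the signs in row [l] by those of [tau] (booleans encode signs,
   and [==] is their product). *)
Definition resign (l : I) (tau : {ffun 'I_n -> bool})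
    (s : {ffun I * 'I_n -> bool}) : {ffun I * 'I_n -> bool} :=
  [ffun p => if p.1 == l then s p == tau p.2 else s p].

Lemma resignK l tau : involutive (resign l tau).
Proof.
move=> s; apply/ffunP => p; rewrite !ffunE.
by case: (p.1 == l) => //; case: (s p); case: (tau p.2).
Qed.

Lemma card_le_resign (l : I) (P : pred {ffun I * 'I_n -> bool}) (B : R) :
  (forall s, (#|[set tau : {ffun 'I_n -> bool} | P (resign l tau s)]|)%:R <= B) ->
  (#|[set s | P s]|)%:R * 2 ^+ n <= (#|{: {ffun I * 'I_n -> bool}}|)%:R * B.
Proof.
move=> card_le.
have -> : (2 ^+ n : R) = \sum_(tau : {ffun 'I_n -> bool}) 1.
  by rewrite sumr_const card_ffun card_bool card_ord -natrX.
rewrite mulr_sumr.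
under eq_bigr => tau _.
  rewrite mulr1 natr_card_setE (reindex_inj (can_inj (resignK l tau))).
over.
rewrite exchange_big /= mulr_natl -sumr_const; apply: ler_sum => s _.
by rewrite -natr_card_setE.
Qed.

End Resign.

Section CorrelationEvent.
Variables (R : realType) (d m N : nat) (gamma L : R) (A : 'M[R]_(m, d)).
Variable ALG : seq (R * 'cV[R]_d) -> 'cV[R]_d.

Definition corr_bad (s : {ffun 'I_N * 'I_d -> bool}) (i l : 'I_N) (k : nat) : bool :=
  gamma / 4 <= `|ip (query gamma L A (vtrunc (vec_of R s) i) ALG k) (vec_of R s l)|.

Lemma vtrunc_resign (s : {ffun 'I_N * 'I_d -> bool}) (tau : {ffun 'I_d -> bool})
    (i l : 'I_N) : (i < l)%N ->
  vtrunc (vec_of R (resign l tau s)) i = vtrunc (vec_of R s) i.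
Proof.
move=> lt_il; apply: funext => l'; rewrite /vtrunc; case: ifP => // le_l'i.
have ne : l' != l by rewrite -val_eqE /= neq_ltn (leq_ltn_trans le_l'i lt_il).
by apply/matrixP => a b; rewrite !mxE ffunE /= (negbTE ne).
Qed.

Hypothesis ball : forall h, in_ball (ALG h).
Hypothesis d_gt0 : (0 < d)%N.

Lemma ip_vec_of_resign (x : 'cV[R]_d) (s : {ffun 'I_N * 'I_d -> bool})
    (tau : {ffun 'I_d -> bool}) (l : 'I_N) :
  ip x (vec_of R (resign l tau s) l) =
  2 / Num.sqrt d%:R * \sum_k (x k 0 * sgb R (s (l, k)) / 2) * sgb R (tau k).
Proof.
rewrite /ip mulr_sumr; apply: eq_bigr => k _; rewrite mxE ffunE /= eqxx.
have sd_neq0 : Num.sqrt d%:R != 0 :> R by rewrite gt_eqF // sqrtr_gt0 ltr0n.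
by rewrite /sgb; case: (s (l, k)); case: (tau k) => /=; field.
Qed.

(* Since [l > i], the query does not depend on [v_l]: resampling the signs
   of [v_l] turns [<x, v_l>] into a Rademacher sum with weights [x_k / sqrt d]. *)
Lemma card_corr_bad_le (i l : 'I_N) (k : nat) : (i < l)%N ->
  (#|[set s | corr_bad s i l k]|)%:R <=
  (#|{: {ffun 'I_N * 'I_d -> bool}}|)%:R *
    (2 * expR (1 / 2 - Num.sqrt d%:R * gamma / 8)).
Proof.
move=> lt_il; set sd := Num.sqrt d%:R.
have sd_gt0 : 0 < sd by rewrite sqrtr_gt0 ltr0n.
set E := expR _.
have -> : 2 * E = 2 ^+ d.+1 * E / 2 ^+ d by rewrite exprS; field; rewrite expf_neq0.
rewrite mulrA ler_pdivlMr ?exprn_gt0 //; apply: (@card_le_resign _ _ _ l) => s /=.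
set x := query gamma L A (vtrunc (vec_of R s) i) ALG k.
pose a k0 := x k0 0 * sgb R (s (l, k0)) / 2.
have x_sqr_le k0 : x k0 0 ^+ 2 <= \sum_k1 x k1 0 ^+ 2.
  by rewrite (bigD1 k0) //= lerDl sumr_ge0 // => k1 _; rewrite sqr_ge0.
have a_sqr k0 : a k0 ^+ 2 = x k0 0 ^+ 2 / 4.
  by rewrite /a !exprMn sqr_sgb; field.
have x_ball : \sum_k1 x k1 0 ^+ 2 <= 1 by exact: ball.
have rescale (S : R) :
    (gamma / 4 <= `|2 / sd * S|) = (sd * gamma / 8 <= `|S|).
  have two_sd_gt0 : 0 < 2 / sd by rewrite divr_gt0.
  rewrite normrM (gtr0_norm two_sd_gt0) -(ler_pM2l two_sd_gt0).
  by congr (_ <= _); field; rewrite gt_eqF.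
have -> : [set tau : {ffun 'I_d -> bool} | corr_bad (resign l tau s) i l k] =
          [set tau : {ffun 'I_d -> bool} | sd * gamma / 8 <= `|\sum_k a k * sgb R (tau k)|].
  apply/setP => tau; rewrite !inE /corr_bad vtrunc_resign // -/x ip_vec_of_resign.
  exact: rescale.
apply: le_trans (card_abs_sum_sgb_ge _ _) _ => [k0|].
  by rewrite a_sqr; have := x_sqr_le k0; lra.
rewrite ler_pM2l ?exprn_gt0 // ler_expR.
have : \sum_k0 a k0 ^+ 2 <= 1 / 4.
  by under eq_bigr do rewrite a_sqr; rewrite -mulr_suml; lra.
lra.
Qed.

End CorrelationEvent.

Lemma leq_card_bigcup (T I : finType) (P : pred I) (F : I -> {set T}) :
  (#|\bigcup_(i | P i) F i| <= \sum_(i | P i) #|F i|)%N.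
Proof.
elim/big_rec2: _ => [|i n U _ le_Un]; first by rewrite cards0.
by rewrite (leq_trans (leq_card_setU _ U).1) ?leq_add2l.
Qed.

Lemma fail_prob_le (R : realType) (d : nat) (delta : R) (A : 'M[R]_(d./2, d))
    (ALG : seq (R * 'cV[R]_d) -> 'cV[R]_d) (T : nat) :
  (0 < d)%N -> (forall h, in_ball (ALG h)) -> 0 < gam d delta ->
  fail_prob delta A ALG T <=
  (NN d delta)%:R ^+ 2 * T%:R * (2 * expR (1 / 2 - Num.sqrt d%:R * gam d delta / 8)).
Proof.
move=> d_gt0 ball gamma_gt0.
set N := NN d delta; set gamma := gam d delta; set L := LL R d.
set p := 2 * expR _.
set C := (#|{: {ffun 'I_N * 'I_d -> bool}}|)%:R : R.
have L_gt0 : 0 < L by exact: expR_gt0.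
rewrite /fail_prob ler_pdivrMr -/N -/C; last first.
  by rewrite ltr0n card_ffun card_bool expn_gt0.
pose bad (q : 'I_N * 'I_N * 'I_T) :=
  [set s | corr_bad gamma L A ALG s q.1.1 q.1.2 q.2].
have sub : [set s | ~~ sorted_times A ALG T s] \subset
           \bigcup_(q : 'I_N * 'I_N * 'I_T | (q.1.1 < q.1.2)%N) bad q.
  apply/fintype.subsetP => s; rewrite inE; apply: contraR => no_bad.
  apply/forallP => i; apply/forallP => j; apply/implyP.
  apply: corr_time_sorted => // i' l k lt_il lt_kT; rewrite ltNge.
  apply: contraNN no_bad => is_bad; apply/bigcupP.
  by exists (i', l, Ordinal lt_kT); rewrite ?inE.
have := leq_trans (subset_leq_card sub) (leq_card_bigcup _ _).
rewrite -(ler_nat R) natr_sum => /le_trans; apply.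
apply: (@le_trans _ _ (\sum_(q : 'I_N * 'I_N * 'I_T) C * p)).
  rewrite big_mkcond; apply: ler_sum => q _; case: ifP => [lt_q|_].
    exact: card_corr_bad_le.
  by rewrite mulr_ge0 ?mulr_ge0 ?expR_ge0 ?ler0n.
rewrite sumr_const !card_prod !card_ord -[C * p *+ _]mulr_natl !natrM expr2 [C * p]mulrC.
by rewrite !mulrA.
Qed.

Section Asymptotics.
Variable R : realType.

Lemma lt_ln_natr (a : R) (d : nat) : ((Num.truncn (expR a)).+1 <= d)%N ->
  a < ln d%:R.
Proof.
move=> le_d; have lt_d : expR a < d%:R.
  by apply: lt_le_trans (truncnS_gt _) _; rewrite ler_nat.
by rewrite -[a]expRK ltr_ln // posrE ?expR_gt0 // (lt_trans (expR_gt0 a)).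
Qed.

Lemma natr_NN_le (d : nat) (delta : R) : 0 < delta <= 6 -> (0 < d)%N ->
  1 <= ln (d%:R : R) -> (NN d delta)%:R <= d%:R :> R.
Proof.
move=> /andP[delta_gt0 delta_le6] d_gt0 ln_ge1.
have d_ge1 : 1 <= d%:R :> R by rewrite ler1n.
have ln4_ge1 : 1 <= ln (d%:R : R) ^+ 4 by rewrite exprn_ege1.
apply: (@le_trans _ _ (d%:R `^ (delta / 6) / ln d%:R ^+ 4)).
  by rewrite truncn_le divr_ge0 ?powR_ge0 ?exprn_ge0 // (le_trans ler01).
apply: (@le_trans _ _ (d%:R `^ (delta / 6))).
  by rewrite ler_pdivrMr ?(lt_le_trans ltr01) // ler_peMr ?powR_ge0.
by apply: ler1_powR => //; lra.
Qed.

Lemma sqr_ln_le_sqrt_mul_gam (d : nat) (delta : R) : 0 < delta <= 2 -> (0 < d)%N ->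
  ln d%:R ^+ 2 <= Num.sqrt d%:R * gam d delta.
Proof.
move=> /andP[delta_gt0 delta_le2] d_gt0.
have d_ge1 : 1 <= d%:R :> R by rewrite ler1n.
have pow_gt0 : 0 < d%:R `^ (delta / 4) :> R by rewrite powR_gt0 // ltr0n.
have pow_le : d%:R `^ (delta / 4) <= Num.sqrt d%:R :> R.
  by rewrite -powR12_sqrt ?ler0n //; apply: ler_powR => //; lra.
rewrite /gam mulrCA ler_peMr ?sqr_ge0 //.
by rewrite ler_pdivlMr // mul1r.
Qed.

Lemma pow_mul_expR_le_powR (D c : R) : 0 < D -> 0 <= c -> 8 * (c + 6) < ln D ->
  D ^+ 5 * expR (1 / 2 - ln D ^+ 2 / 8) <= D `^ (- c).
Proof.
move=> D_gt0 c_ge0 ln_gt.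
rewrite /powR gt_eqF // -[in D ^+ 5](lnK D_gt0) -expRM_natl -expRD ler_expR.
have : 0 < ln D * (ln D - 8 * (c + 6)) by rewrite mulr_gt0 ?subr_gt0 //; lra.
nra.
Qed.

End Asymptotics.

Lemma fail_prob_le_pow (R : realType) (d : nat) (delta : R) (A : 'M[R]_(d./2, d))
    (ALG : seq (R * 'cV[R]_d) -> 'cV[R]_d) (T : nat) :
  0 < delta < 1 -> 1 <= ln (d%:R : R) -> T%:R <= d%:R ^+ 2 :> R ->
  (forall h, in_ball (ALG h)) ->
  fail_prob delta A ALG T <= d%:R ^+ 5 * expR (1 / 2 - ln (d%:R : R) ^+ 2 / 8).
Proof.
move=> /andP[delta_gt0 delta_lt1] ln_ge1 T_le ball; set D := d%:R : R.
have D_gt1 : 1 < D by rewrite ltNge; apply: contraTN ln_ge1 => /ln_le0; lra.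
have d_gt0 : (0 < d)%N by rewrite -(ltr0n R) (lt_trans ltr01).
have D_ge2 : 2 <= D.
  by have := expR_ge1Dx (ln D); rewrite lnK ?posrE ?(lt_trans ltr01); lra.
have N_le : (NN d delta)%:R <= D by apply: natr_NN_le => //; rewrite delta_gt0 /=; lra.
have gamma_ge : ln D ^+ 2 <= Num.sqrt D * gam d delta.
  by apply: sqr_ln_le_sqrt_mul_gam => //; rewrite delta_gt0 /=; lra.
apply: le_trans (fail_prob_le A T d_gt0 ball _) _.
  by rewrite /gam divr_gt0 ?powR_gt0 ?ltr0n // exprn_gt0 //; lra.
have -> : D ^+ 5 * expR (1 / 2 - ln D ^+ 2 / 8) =
          D ^+ 2 * D ^+ 2 * (D * expR (1 / 2 - ln D ^+ 2 / 8)) by ring.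
apply: ler_pM; rewrite ?mulr_ge0 ?expR_ge0 //.
  by apply: ler_pM; rewrite ?sqr_ge0 // !expr2 ler_pM.
by apply: ler_pM; rewrite ?expR_ge0 ?ler_expR //; lra.
Qed.

Local Open Scope classical_set_scope.

Theorem lemma4p2 (R : realType) (delta : R) (eps : nat -> R) :
  0 < delta < 1 ->
  eps @ \oo --> (0 : R^o) ->
  forall c : R, 0 < c ->
  exists d0 : nat, forall (d T : nat), (d0 <= d)%N -> ~~ odd d ->
    T%:R <= (d%:R : R) `^ (1 + delta / 6 - eps d) ->
    forall A : 'M[R]_(d./2, d), (forall i j, A i j = 1 \/ A i j = -1) ->
    forall ALG : seq (R * 'cV[R]_d) -> 'cV[R]_d,
      (forall h, in_ball (ALG h)) ->
      fail_prob delta A ALG T <= (d%:R : R) `^ (- c).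
Proof.
move=> delta_bounds eps_cvg c c_gt0.
have half_gt0 : 0 < 1 / 2 :> R by lra.
have [n0 _ eps_small] := @cvgr_dist_lt _ _ _ _ _ eps 0 eps_cvg _ half_gt0.
exists (maxn n0 (Num.truncn (expR (8 * (c + 6)))).+1) => d T.
rewrite geq_max => /andP[le_n0 le_K] _ T_le A _ ALG ball.
have ln_gt := lt_ln_natr le_K.
have D_ge1 : 1 <= d%:R :> R by rewrite ler1n (leq_trans _ le_K).
have T_le_sqr : T%:R <= d%:R ^+ 2 :> R.
  have /ltr_normlP[_ eps_hi] := eps_small d le_n0; rewrite sub0r in eps_hi.
  apply: le_trans T_le _; rewrite -powR_mulrn ?(le_trans ler01) //.
  by apply: ler_powR => //; case/andP: delta_bounds; lra.
apply: le_trans (fail_prob_le_pow A delta_bounds _ T_le_sqr ball) _; first lra.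
exact: pow_mul_expR_le_powR (lt_le_trans ltr01 D_ge1) (ltW c_gt0) ln_gt.
Qed.
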